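(* Let $P=\{x\in\mathbb{R}^n: Ax\ge b\}$ with rational data be full-dimensional and pointed, $c\in\mathbb{R}^n$, and $\bar x$ a basic optimal solution of $\min\{c^\top x: x\in P\}$. Consider a split disjunction with two terms $P^1=\{x\in P:\pi^\top x\le\pi_0\}$ and $P^2=\{x\in P:\pi^\top x\ge\pi_0+1\}$, and let $P_D=\operatorname{cl}\operatorname{conv}(P^1\cup P^2)$, with $\bar x\notin P_D$. For $t\in\{1,2\}$, let $p^t$ be a basic optimal solution of $\min\{c^\top x:x\in P^t\}$, $C^t$ the basis cone at $p^t$ with extreme rays $r^{t1},\dots,r^{tn}$, and $P_D^0=\operatorname{conv}\{p^1,p^2\}+\operatorname{cone}\{r^{tj}: t\in\{1,2\}, j\in[n]\}$. Suppose the bases defining $p^1$ and $p^2$ are unique. Then every facet of $P_D^0$ that is tight on both $p^1$ and $p^2$ is a facet of $P_D$. Moreover, every facet of $P_D$ that is tight on both $p^1$ and $p^2$ and cuts off $\bar x$ exists as a facet of $P_D^0$.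
   Context: A cobasis of a basic solution $p^t$ of $P^t$ is a set of $n$ linearly independent inequalities from the system defining $P^t$ that are tight at $p^t$; the basis cone $C^t$ at $p^t$ is the intersection of these $n$ half-spaces, a cone with apex $p^t$ and $n$ extreme rays. Here $\pi\in\mathbb{Z}^n$, $\pi_0\in\mathbb{Z}$ define the split. *)

From HB Require Import structures.
From mathcomp Require Import all_boot all_order all_algebra.
From mathcomp Require Import all_classical all_reals topology num_topology matrix_topology.
Set Implicit Arguments. Unset Strict Implicit. Unset Printing Implicit Defensive.
Import Order.TTheory GRing.Theory Num.Theory.
Local Open Scope ring_scope.
Import numFieldTopology.Exports.
Local Open Scope classical_set_scope.

Section Polyhedra.
Variables (R : realType) (n : nat).
Notation V := 'cV[R]_n.

Definition dot (u v : V) : R := \sum_(i < n) u i 0 * v i 0.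

Definition polyh (M : nat) (A : 'M[R]_(M, n)) (b : 'cV[R]_M) : set V :=
  [set x | forall i : 'I_M, b i 0 <= (A *m x) i 0].

Definition tight (M : nat) (A : 'M[R]_(M, n)) (b : 'cV[R]_M) (x : V) (i : 'I_M) :=
  (A *m x) i 0 = b i 0.

Definition lin_indep_rows (M : nat) (A : 'M[R]_(M, n)) (B : {set 'I_M}) :=
  forall l : 'I_M -> R, \sum_(i in B) l i *: row i A = 0 ->
    forall i, i \in B -> l i = 0.

Definition cobasis (M : nat) (A : 'M[R]_(M, n)) (b : 'cV[R]_M) (p : V)
    (B : {set 'I_M}) :=
  [/\ #|B| = n, lin_indep_rows A B & forall i, i \in B -> tight A b p i].

Definition basic_optimal (M : nat) (A : 'M[R]_(M, n)) (b : 'cV[R]_M) (c p : V) :=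
  [/\ polyh A b p, exists B, cobasis A b p B &
      forall x, polyh A b x -> dot c p <= dot c x].

Definition basis_cone (M : nat) (A : 'M[R]_(M, n)) (b : 'cV[R]_M)
    (B : {set 'I_M}) : set V :=
  [set x | forall i, i \in B -> b i 0 <= (A *m x) i 0].

Definition conv (S : set V) : set V :=
  [set x | exists (k : nat) (s : 'I_k -> V) (l : 'I_k -> R),
     [/\ forall j, S (s j), forall j, 0 <= l j, \sum_j l j = 1 &
         x = \sum_j l j *: s j]].

Definition cone (S : set V) : set V :=
  [set x | exists (k : nat) (s : 'I_k -> V) (l : 'I_k -> R),
     [/\ forall j, S (s j), forall j, 0 <= l j & x = \sum_j l j *: s j]].

Definition msum (S T : set V) : set V :=
  [set z | exists x y, [/\ S x, T y & z = x + y]].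

Definition ext_ray_dir (C : set V) (p : V) : set V :=
  [set d | [/\ C (p + d), d != 0 &
     forall u v, C (p + u) -> C (p + v) -> d = u + v ->
       exists lu lv, [/\ 0 <= lu, 0 <= lv, u = lu *: d & v = lv *: d]]].

Definition has_affindep (S : set V) (k : nat) :=
  exists (x0 : V) (x : 'I_k -> V),
    [/\ S x0, forall j, S (x j) &
        forall l : 'I_k -> R, \sum_j l j *: (x j - x0) = 0 -> forall j, l j = 0].

Definition affdim (S : set V) (k : nat) := has_affindep S k /\ ~ has_affindep S k.+1.

Definition pointed (S : set V) :=
  ~ exists x d : V, d != 0 /\ forall lam : R, S (x + lam *: d).

Definition valid_ineq (S : set V) (a : V) (beta : R) :=
  forall x, S x -> beta <= dot a x.

Definition face_of (S : set V) (a : V) (beta : R) : set V :=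
  [set x | S x /\ dot a x = beta].

Definition facet_ineq (S : set V) (a : V) (beta : R) :=
  valid_ineq S a beta /\
  exists k, affdim S k.+1 /\ affdim (face_of S a beta) k.

End Polyhedra.

Section Split.
Variables (R : realType) (n m : nat).

Definition ratmx (p q : nat) (A : 'M[rat]_(p, q)) : 'M[R]_(p, q) :=
  map_mx (fun x : rat => ratr x) A.
Definition intmx (p q : nat) (A : 'M[int]_(p, q)) : 'M[R]_(p, q) :=
  map_mx (fun x : int => x%:~R) A.

(* system of P^1 = {x in P : pi^T x <= pi0}, written as  -pi^T x >= -pi0 *)
Definition sysA1 (A : 'M[rat]_(m, n)) (pi : 'cV[int]_n) : 'M[R]_(m + 1, n) :=
  col_mx (ratmx A) (- (intmx pi)^T).
Definition sysb1 (b : 'cV[rat]_m) (pi0 : int) : 'cV[R]_(m + 1) :=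
  col_mx (ratmx b) (const_mx (- pi0%:~R)).
Definition sysA2 (A : 'M[rat]_(m, n)) (pi : 'cV[int]_n) : 'M[R]_(m + 1, n) :=
  col_mx (ratmx A) (intmx pi)^T.
Definition sysb2 (b : 'cV[rat]_m) (pi0 : int) : 'cV[R]_(m + 1) :=
  col_mx (ratmx b) (const_mx (pi0 + 1)%:~R).

Definition PD (A : 'M[rat]_(m, n)) (b : 'cV[rat]_m) (pi : 'cV[int]_n) (pi0 : int)
  : set 'cV[R]_n :=
  closure (conv (polyh (sysA1 A pi) (sysb1 b pi0) `|` polyh (sysA2 A pi) (sysb2 b pi0))).

Definition PD0 (A : 'M[rat]_(m, n)) (b : 'cV[rat]_m) (pi : 'cV[int]_n) (pi0 : int)
  (p1 p2 : 'cV[R]_n) (B1 B2 : {set 'I_(m + 1)}) : set 'cV[R]_n :=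
  msum (conv [set x | x = p1 \/ x = p2])
       (cone (ext_ray_dir (basis_cone (sysA1 A pi) (sysb1 b pi0) B1) p1 `|`
              ext_ray_dir (basis_cone (sysA2 A pi) (sysb2 b pi0) B2) p2)).

End Split.

(* Write r^{tj} for the extreme rays of the basis cone C^t.  Both P_D^0 and
   P_D contain p^1, p^2 and an initial segment of every ray p^t + R_+ r^{tj};
   for P_D this is where uniqueness of the cobasis enters: it forces every
   other inequality tight at p^t to have a zero row, so p^t + lam r^{tj} stays
   in P^t for small lam > 0.  Both sets also lie in every half-space
   a^T x >= beta that is tight at p^1 and p^2 and nonnegative on all r^{tj}
   (P^t lies in C^t).  Hence an inequality tight at p^1 and p^2 is valid for
   one set iff it is valid for the other, and on either set the face it
   defines is affinely spanned by p^1, p^2 and the rays r^{tj} with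
   a^T r^{tj} = 0: these points lie on both faces, and conversely a
   functional orthogonal to their directions can be added to a with a small
   coefficient of either sign without losing validity, so it is constant on
   the face.  Thus the facets through p^1 and p^2 coincide. *)

From HB Require Import structures.
From mathcomp Require Import all_boot all_order all_algebra.
From mathcomp Require Import all_classical all_reals topology num_topology matrix_topology.
Set Implicit Arguments. Unset Strict Implicit. Unset Printing Implicit Defensive.
Import Order.TTheory GRing.Theory Num.Theory.
Local Open Scope ring_scope.
Import numFieldTopology.Exports.
Local Open Scope classical_set_scope.

Section LinearAlgebra.
Variables (R : realType) (n : nat).
Local Notation V := 'cV[R]_n.

Lemma dotE (u v : V) : dot u v = (u^T *m v) 0 0.
Proof. by rewrite /dot mxE; apply: eq_bigr => i _; rewrite mxE. Qed.

Lemma dotC (u v : V) : dot u v = dot v u.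
Proof. by apply: eq_bigr => i _; rewrite mulrC. Qed.

Lemma dotDr (a x y : V) : dot a (x + y) = dot a x + dot a y.
Proof. by rewrite !dotE mulmxDr mxE. Qed.

Lemma dotZr (a x : V) c : dot a (c *: x) = c * dot a x.
Proof. by rewrite !dotE -scalemxAr mxE. Qed.

Lemma dotBr (a x y : V) : dot a (x - y) = dot a x - dot a y.
Proof. by rewrite dotDr -scaleN1r dotZr mulN1r. Qed.

Lemma dot0r (a : V) : dot a 0 = 0.
Proof. by rewrite dotE mulmx0 mxE. Qed.

Lemma dot_sumr k (a : V) (f : 'I_k -> V) : dot a (\sum_j f j) = \sum_j dot a (f j).
Proof. by rewrite dotE mulmx_sumr summxE; apply: eq_bigr => j _; rewrite dotE. Qed.

Lemma dotDl (a b x : V) : dot (a + b) x = dot a x + dot b x.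
Proof. by rewrite dotC dotDr !(dotC x). Qed.

Lemma dotZl (a x : V) c : dot (c *: a) x = c * dot a x.
Proof. by rewrite dotC dotZr dotC. Qed.

Lemma dot0l (x : V) : dot 0 x = 0.
Proof. by rewrite dotC dot0r. Qed.

Lemma dot_self_gt0 (a : V) : a != 0 -> 0 < dot a a.
Proof.
move=> a_neq0; have sqr_ge0 i : true -> 0 <= a i 0 * a i 0 by rewrite -expr2 sqr_ge0.
rewrite lt_def sumr_ge0 // andbT; apply: contra a_neq0 => /eqP dot0.
apply/eqP/matrixP => i j; rewrite (ord1 j) mxE.
by have /eqP := @psumr_eq0P _ _ _ _ sqr_ge0 dot0 i isT; rewrite mulf_eq0 orbb => /eqP.
Qed.

Definition lin_indep k (v : 'I_k -> V) :=
  forall l : 'I_k -> R, \sum_j l j *: v j = 0 -> forall j, l j = 0.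

Definition fammx k (v : 'I_k -> V) : 'M[R]_(k, n) := \matrix_(j < k) (v j)^T.

Lemma fammx_mulmx k (v : 'I_k -> V) (w : V) j : (fammx v *m w) j 0 = dot (v j) w.
Proof. by rewrite dotE !mxE; apply: eq_bigr => i _; rewrite !mxE. Qed.

Lemma mulmx_fammx k (v : 'I_k -> V) (z : 'rV_k) : z *m fammx v = (\sum_j z 0 j *: v j)^T.
Proof. by apply/rowP => i; rewrite !mxE summxE; apply: eq_bigr => j _; rewrite !mxE. Qed.

Lemma ker0_row_free k m (M : 'M[R]_(k, m)) :
  (forall c : 'rV_k, c *m M = 0 -> c = 0) -> row_free M.
Proof.
move=> M_ker0; rewrite -kermx_eq0; apply/eqP/row_matrixP => r.
by rewrite row0; apply: M_ker0; rewrite -row_mul mulmx_ker row0.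
Qed.

Lemma lin_indep_row_free k (v : 'I_k -> V) : lin_indep v <-> row_free (fammx v).
Proof.
split=> [v_indep | v_free l sum0 j].
  apply: ker0_row_free => c; rewrite mulmx_fammx => /(congr1 trmx).
  by rewrite trmxK trmx0 => /v_indep c0; apply/rowP => j; rewrite c0 mxE.
have /eqP : (\row_j l j) *m fammx v = 0.
  by rewrite mulmx_fammx; under eq_bigr do rewrite mxE; rewrite sum0 trmx0.
by rewrite mulmx_free_eq0 // => /eqP/rowP/(_ j); rewrite !mxE.
Qed.

Lemma lin_indep_leq k (v : 'I_k -> V) : lin_indep v -> (k <= n)%N.
Proof.
by move/lin_indep_row_free; rewrite -row_leq_rank => /leq_trans; apply; exact: rank_leq_col.
Qed.

Lemma lin_indep_comp k r (v : 'I_r -> V) (h : 'I_k -> 'I_r) :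
  injective h -> lin_indep v -> lin_indep (v \o h).
Proof.
move=> h_inj v_indep l sum0 j; pose l' i := \sum_(t | h t == i) l t.
have l'_h t : l' (h t) = l t.
  by rewrite /l' (big_pred1 t) // => s; rewrite inj_eq.
rewrite -l'_h; apply: v_indep; rewrite -[RHS]sum0 (partition_big h xpredT) //=.
by apply: eq_bigr => i _; rewrite scaler_suml; apply: eq_bigr => t /eqP <-.
Qed.

Lemma lin_indep_scale k (v : 'I_k -> V) (c : 'I_k -> R) :
  (forall j, c j != 0) -> lin_indep v -> lin_indep (fun j => c j *: v j).
Proof.
move=> c_neq0 v_indep l sum0 j; apply/eqP; rewrite -(mulIr_eq0 _ (mulIf (c_neq0 j))).
apply/eqP; apply: (v_indep (fun j => l j * c j)).
by rewrite -[RHS]sum0; apply: eq_bigr => i _; rewrite scalerA.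
Qed.

Definition extend k (v : 'I_k -> V) (a : V) (j : 'I_k.+1) : V :=
  if unlift ord_max j is Some i then v i else a.

Lemma lin_indep_extend k (v : 'I_k -> V) a :
  lin_indep v -> a != 0 -> (forall j, dot a (v j) = 0) -> lin_indep (extend v a).
Proof.
move=> v_indep a_neq0 av0 l.
have liftE (i : 'I_k) : widen_ord (leqnSn k) i = lift ord_max i.
  by apply: val_inj; rewrite /= /bump leqNgt ltn_ord.
rewrite big_ord_recr /= /extend unlift_none.
under eq_bigr do rewrite liftE liftK.
move=> sum0; have la0 : l ord_max = 0.
  have /eqP := congr1 (dot a) sum0.
  rewrite dotDr dot_sumr big1 => [|i _]; last by rewrite dotZr av0 mulr0.
  by rewrite add0r dotZr dot0r mulf_eq0 (gt_eqF (dot_self_gt0 a_neq0)) orbF => /eqP.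
rewrite la0 scale0r addr0 in sum0.
by move=> j; case: (unliftP ord_max j) => [i ->|->] //; exact: v_indep _ sum0 i.
Qed.

Lemma lin_indep_orth_ltn k (v : 'I_k -> V) a :
  lin_indep v -> a != 0 -> (forall j, dot a (v j) = 0) -> (k < n)%N.
Proof. by move=> v_indep a_neq0 /(lin_indep_extend v_indep a_neq0)/lin_indep_leq. Qed.

Lemma ker0_row_full m (C : 'M[R]_(m, n)) :
  (forall w : V, C *m w = 0 -> w = 0) -> row_full C.
Proof.
move=> C_ker0; have : cokermx C = 0.
  apply/matrixP => i j; rewrite mxE.
  have := C_ker0 (cokermx C *m delta_mx j 0).
  rewrite mulmxA mulmx_coker mul0mx => /(_ erefl)/matrixP/(_ i 0).
  by rewrite -colE !mxE.
move/eqP; rewrite -mxrank_eq0 mxrank_coker subn_eq0 => rank_ge.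
by rewrite /row_full eqn_leq rank_ge rank_leq_col.
Qed.

Lemma exists_lin_indep_subfamily N (u : 'I_N -> V) (a : V) :
  (forall w, dot w a = 0 -> (forall i, dot w (u i) = 0) -> w = 0) ->
  exists f : 'I_n.-1 -> 'I_N, lin_indep (u \o f).
Proof.
move=> orth0; pose U := fammx u.
have /eqP rankUa : row_full (col_mx U a^T).
  apply: ker0_row_full => w; rewrite mul_col_mx => /eqP; rewrite col_mx_eq0.
  case/andP => /eqP/matrixP Uw /eqP/matrixP aw; apply: orth0.
    by rewrite dotC dotE aw !mxE.
  by move=> i; rewrite dotC -fammx_mulmx Uw mxE.
have rankU : (n.-1 <= \rank U)%N.
  have := (mxrank_adds_leqif U a^T).1; rewrite addsmxE rankUa => /leq_trans.
  move/(_ _ (leq_add (leqnn _) (rank_leq_row a^T))).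
  by rewrite -subn1 leq_subLR addnC.
pose g := maxrankfun U.
have indep_g : lin_indep (u \o g).
  apply/lin_indep_row_free.
  have -> : fammx (u \o g) = rowsub g U by apply/matrixP => i j; rewrite !mxE.
  exact: maxrowsub_free.
exists (g \o widen_ord rankU); apply: (lin_indep_comp (v := u \o g)) indep_g.
by move=> x y /(congr1 val) /= /val_inj.
Qed.

End LinearAlgebra.

Section AffineDimension.
Variables (R : realType) (n : nat).
Local Notation V := 'cV[R]_n.
Implicit Types (S T : set V) (a : V).

Lemma has_affindep_le S k j : (k <= j)%N -> has_affindep S j -> has_affindep S k.
Proof.
move=> le_kj [x0 [x [Sx0 Sx x_indep]]]; exists x0, (x \o widen_ord le_kj).
split=> // [i|]; first exact: Sx.
have widen_inj : injective (widen_ord le_kj).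
  by move=> y z /(congr1 val) /= /val_inj.
exact: (lin_indep_comp (v := fun j => x j - x0) widen_inj x_indep).
Qed.

Lemma has_affindep_sub S T k : S `<=` T -> has_affindep S k -> has_affindep T k.
Proof. by move=> sST [x0 [x [Sx0 Sx x_indep]]]; exists x0, x; split=> [|j|]; auto. Qed.

Lemma has_affindep_leq S k : has_affindep S k -> (k <= n)%N.
Proof. by move=> [x0 [x [_ _ x_indep]]]; exact: (lin_indep_leq x_indep). Qed.

Lemma affdim_full S : has_affindep S n -> affdim S n.
Proof. by move=> Sn; split=> // /has_affindep_leq; rewrite ltnn. Qed.

Lemma affdim_unique S k j : affdim S k -> affdim S j -> k = j.
Proof.
move=> [Sk Nk] [Sj Nj]; apply/eqP; rewrite eqn_leq; apply/andP.
by split; rewrite leqNgt; apply/negP => lt; [apply: Nj | apply: Nk];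
  exact: has_affindep_le lt _.
Qed.

Lemma hyperplane_not_affindep S a beta :
  a != 0 -> (forall x, S x -> dot a x = beta) -> ~ has_affindep S n.
Proof.
move=> a_neq0 Sa [x0 [x [Sx0 Sx x_indep]]].
have /(lin_indep_orth_ltn x_indep a_neq0) : forall j, dot a (x j - x0) = 0.
  by move=> j; rewrite dotBr !Sa // subrr.
by rewrite ltnn.
Qed.

Lemma has_affindep_hyperplane S T a beta p (s : seq V) :
  a != 0 -> (forall x, S x -> dot a x = beta) -> has_affindep S n.-1 ->
  T p -> {in s, forall y, T y} ->
  (forall w, dot w a = 0 -> {in s, forall y, dot w y = dot w p} ->
     forall x, S x -> dot w x = dot w p) ->
  has_affindep T n.-1.
Proof.
move=> a_neq0 Sa [x0 [x [Sx0 Sx x_indep]]] Tp Ts const.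
pose u (i : 'I_(size s)) := nth 0 s i - p.
have [f f_indep] : exists f : 'I_n.-1 -> 'I_(size s), lin_indep (u \o f).
  apply: (exists_lin_indep_subfamily (a := a)) => w wa wu.
  apply/eqP; apply: contraT => w_neq0.
  have w_const : {in s, forall y, dot w y = dot w p}.
    move=> y ys; have /eqP := wu (Ordinal (etrans (index_mem y s) ys)).
    by rewrite dotBr /= nth_index // subr_eq0 => /eqP.
  have xa0 j : dot a (x j - x0) = 0 by rewrite dotBr !Sa // subrr.
  have xw0 j : dot w (x j - x0) = 0.
    by rewrite dotBr (const w wa w_const _ (Sx j)) (const w wa w_const _ Sx0) subrr.
  have w_orth j : dot w (extend (fun j => x j - x0) a j) = 0.
    by rewrite /extend; case: unlift => [i|] //; exact: xw0.
  have := lin_indep_orth_ltn (lin_indep_extend x_indep a_neq0 xa0) w_neq0 w_orth.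
  by case: (n) => [|k] //=; rewrite ltnn.
exists p, (fun j => p + u (f j)); split=> // [j|].
  by rewrite addrC subrK; apply/Ts/mem_nth.
by move=> l; under eq_bigr do rewrite addrC addKr; exact: f_indep.
Qed.

End AffineDimension.

Section Convexity.
Variables (R : realType) (n : nat).
Local Notation V := 'cV[R]_n.
Implicit Types (S T : set V) (a : V).

Lemma sub_conv S : S `<=` conv S.
Proof.
move=> x Sx; exists 1%N, (fun _ => x), (fun _ => 1).
by split=> //; rewrite big_ord1 ?scale1r.
Qed.

Lemma sub_cone S : S `<=` cone S.
Proof.
move=> x Sx; exists 1%N, (fun _ => x), (fun _ => 1).
by split=> //; rewrite big_ord1 scale1r.
Qed.

Lemma cone0 S : cone S 0.
Proof. by exists 0%N, (fun _ => 0), (fun _ => 0); split=> [[]|[]|]; rewrite ?big_ord0. Qed.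

Lemma valid_conv S a beta : valid_ineq S a beta -> valid_ineq (conv S) a beta.
Proof.
move=> vS x [k [s [l [Ss l_ge0 l_sum1 ->]]]].
rewrite dot_sumr -[beta]mul1r -l_sum1 mulr_suml; apply: ler_sum => j _.
by rewrite dotZr ler_wpM2l // vS.
Qed.

Lemma valid_cone S a : valid_ineq S a 0 -> valid_ineq (cone S) a 0.
Proof.
move=> vS x [k [s [l [Ss l_ge0 ->]]]].
by rewrite dot_sumr sumr_ge0 // => j _; rewrite dotZr mulr_ge0 // vS.
Qed.

Lemma valid_msum S T a beta gamma :
  valid_ineq S a beta -> valid_ineq T a gamma -> valid_ineq (msum S T) a (beta + gamma).
Proof. by move=> vS vT _ [x [y [Sx Ty ->]]]; rewrite dotDr lerD // (vS, vT). Qed.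

Lemma valid_closure S a beta : valid_ineq S a beta -> valid_ineq (closure S) a beta.
Proof.
move=> vS x clx; rewrite leNgt; apply/negP => ltx.
pose s := 1 + \sum_i `|a i 0|.
have s_gt0 : 0 < s by rewrite ltr_pwDl // sumr_ge0.
pose e := (beta - dot a x) / s.
have e_gt0 : 0 < e by rewrite divr_gt0 // subr_gt0.
have [y [Sy xy]] : S `&` [set y | forall i j, ball (x i j) e (y i j)] !=set0.
  by apply: clx; exists (fun i j => ball (x i j) e) => // i j; exact: nbhsx_ballx.
have : dot a y - dot a x <= (\sum_i `|a i 0|) * e.
  rewrite /dot -sumrB mulr_suml; apply: ler_sum => i _; rewrite -mulrBr.
  apply: le_trans (ler_norm _) _; rewrite normrM ler_wpM2l //.
  by have := xy i 0; rewrite /ball /= distrC => /ltW.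
apply/negP; rewrite -ltNge ltrBrDl; apply: lt_le_trans (vS _ Sy).
rewrite -ltrBrDl /e mulrA ltr_pdivrMr // mulrC ltr_pM2l ?subr_gt0 //.
by rewrite ltr_pwDl.
Qed.

End Convexity.

Lemma exists_dominating_scale (R : realType) (I : finType) (c d : I -> R) :
  (forall i, 0 <= c i) -> (forall i, c i = 0 -> d i = 0) ->
  exists2 e, 0 < e & forall i, e * `|d i| <= c i.
Proof.
move=> c_ge0 cd.
pose s := 1 + \sum_i `|d i| / c i.
have s_gt0 : 0 < s by rewrite ltr_pwDl // sumr_ge0 // => i _; rewrite divr_ge0.
exists s^-1 => [|i]; first by rewrite invr_gt0.
have [ci0|ci_neq0] := eqVneq (c i) 0; first by rewrite ci0 cd // normr0 mulr0.
have ci_gt0 : 0 < c i by rewrite lt_def ci_neq0 c_ge0.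
rewrite mulrC ler_pdivrMr // mulrC -ler_pdivrMr //.
apply: le_trans (ler_wpDl ler01 (le_refl _)).
by rewrite (bigD1 i) //= ler_wpDr // sumr_ge0 // => k _; rewrite divr_ge0.
Qed.

Section ConeSandwich.
Variables (R : realType) (n : nat).
Local Notation V := 'cV[R]_n.
Variables (p1 p2 : V) (g1 g2 : 'I_n -> V).

Definition supports_cones (a : V) (beta : R) :=
  [/\ dot a p1 = beta, dot a p2 = beta,
      forall j, 0 <= dot a (g1 j) & forall j, 0 <= dot a (g2 j)].

(* Near [p1] and [p2] such a set looks like the cones [p1 + cone g1] and
   [p2 + cone g2]; this is all that its facets through [p1] and [p2] see. *)
Definition cone_sandwiched (X : set V) :=
  [/\ X p1, X p2,
      exists2 lam : 'I_n -> R, forall j, 0 < lam j & forall j, X (p1 + lam j *: g1 j),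
      exists2 lam : 'I_n -> R, forall j, 0 < lam j & forall j, X (p2 + lam j *: g2 j) &
      forall a beta, supports_cones a beta -> valid_ineq X a beta].

Section Sandwiched.
Variable X : set V.
Hypothesis sX : cone_sandwiched X.

Lemma supports_cones_valid a beta :
  dot a p1 = beta -> dot a p2 = beta -> valid_ineq X a beta -> supports_cones a beta.
Proof.
have [_ _ [lam1 lam1_gt0 ray1] [lam2 lam2_gt0 ray2] _] := sX.
move=> ap1 ap2 vX; split=> // j.
  by have /vX := ray1 j; rewrite dotDr dotZr ap1 lerDl pmulr_rge0.
by have /vX := ray2 j; rewrite dotDr dotZr ap2 lerDl pmulr_rge0.
Qed.

Lemma cone_sandwiched_affdim : lin_indep g1 -> affdim X n.
Proof.
move=> g1_indep; have [Xp1 _ [lam lam_gt0 ray] _ _] := sX.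
have lam_neq0 j : lam j != 0 by rewrite gt_eqF.
apply: affdim_full; exists p1, (fun j => p1 + lam j *: g1 j); split=> // l.
under eq_bigr do rewrite addrC addKr.
exact: (lin_indep_scale lam_neq0 g1_indep).
Qed.

Lemma cone_sandwiched_face_const a beta w :
  supports_cones a beta -> dot w p2 = dot w p1 ->
  (forall j, dot a (g1 j) = 0 -> dot w (g1 j) = 0) ->
  (forall j, dot a (g2 j) = 0 -> dot w (g2 j) = 0) ->
  forall x, face_of X a beta x -> dot w x = dot w p1.
Proof.
move=> [ap1 ap2 ag1 ag2] wp wg1 wg2 x [Xx ax].
pose g i := match i with inl j => g1 j | inr j => g2 j end.
have [e e_gt0 dom] : exists2 e, 0 < e & forall i, e * `|dot w (g i)| <= dot a (g i).
  apply: exists_dominating_scale => -[] j /=;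
  by [apply: ag1 | apply: ag2 | apply: wg1 | apply: wg2].
have tilt (s : R) : `|s| <= e -> s * dot w p1 <= s * dot w x.
  move=> s_le; have [_ _ _ _ vX] := sX.
  have tilt_ge0 c d : e * `|d| <= c -> 0 <= c + s * d.
    move=> ed; rewrite -[s * d]opprK subr_ge0; apply: le_trans ed.
    by apply: le_trans (ler_norm _) _; rewrite normrN normrM ler_wpM2r.
  have supp_tilt : supports_cones (a + s *: w) (beta + s * dot w p1).
    split=> [||j|j]; rewrite dotDl dotZl ?ap1 ?ap2 ?wp //; apply: tilt_ge0.
      exact: (dom (inl j)).
    exact: (dom (inr j)).
  by have := vX _ _ supp_tilt x Xx; rewrite dotDl dotZl ax lerD2l.
apply/eqP; rewrite eq_le; apply/andP; split; rewrite -(ler_pM2l e_gt0).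
  by rewrite -lerN2 -!mulNr tilt // normrN gtr0_norm.
by rewrite tilt // gtr0_norm.
Qed.

Lemma cone_sandwiched_face_points a beta : supports_cones a beta ->
  exists s : seq V, {in s, forall y, face_of X a beta y} /\
    forall w, {in s, forall y, dot w y = dot w p1} ->
      [/\ dot w p2 = dot w p1,
          forall j, dot a (g1 j) = 0 -> dot w (g1 j) = 0 &
          forall j, dot a (g2 j) = 0 -> dot w (g2 j) = 0].
Proof.
move=> [ap1 ap2 _ _].
have [Xp1 Xp2 [lam1 lam1_gt0 ray1] [lam2 lam2_gt0 ray2] _] := sX.
pose s1 := [seq p1 + lam1 j *: g1 j | j <- enum 'I_n & dot a (g1 j) == 0].
pose s2 := [seq p2 + lam2 j *: g2 j | j <- enum 'I_n & dot a (g2 j) == 0].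
exists (p2 :: s1 ++ s2); split.
  move=> y; rewrite inE mem_cat => /orP[/eqP ->|/orP[]] //.
    case/mapP=> j; rewrite mem_filter => /andP[/eqP aj _] ->.
    by split; rewrite // dotDr dotZr aj mulr0 addr0.
  case/mapP=> j; rewrite mem_filter => /andP[/eqP aj _] ->.
  by split; rewrite // dotDr dotZr aj mulr0 addr0.
move=> w ws; have wp : dot w p2 = dot w p1 by apply/ws/mem_head.
have in_s1 j : dot a (g1 j) = 0 -> p1 + lam1 j *: g1 j \in p2 :: s1 ++ s2.
  move=> aj; rewrite inE mem_cat; apply/orP; right; apply/orP; left.
  by apply: map_f; rewrite mem_filter aj eqxx mem_enum.
have in_s2 j : dot a (g2 j) = 0 -> p2 + lam2 j *: g2 j \in p2 :: s1 ++ s2.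
  move=> aj; rewrite inE mem_cat; apply/orP; right; apply/orP; right.
  by apply: map_f; rewrite mem_filter aj eqxx mem_enum.
split=> // j /[dup] aj.
  move=> /in_s1/ws/eqP; rewrite dotDr dotZr addrC -subr_eq0 addrK.
  by rewrite mulf_eq0 gt_eqF //= => /eqP.
move=> /in_s2/ws/eqP; rewrite dotDr dotZr wp addrC -subr_eq0 addrK.
by rewrite mulf_eq0 gt_eqF //= => /eqP.
Qed.

End Sandwiched.

Lemma facet_ineq_cone_sandwiched X Y a beta :
  lin_indep g1 -> cone_sandwiched X -> cone_sandwiched Y ->
  dot a p1 = beta -> dot a p2 = beta ->
  facet_ineq X a beta -> facet_ineq Y a beta.
Proof.
move=> g1_indep sX sY ap1 ap2 [vX [k [dimX [dimF noF]]]].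
have supp := supports_cones_valid sX ap1 ap2 vX.
have k_succ : k.+1 = n := affdim_unique dimX (cone_sandwiched_affdim sX g1_indep).
have on_face Z x : face_of Z a beta x -> dot a x = beta by case.
have a_neq0 : a != 0.
  apply/eqP => a0; apply: noF; apply: has_affindep_sub dimX.1 => x Xx.
  by split; rewrite // -ap1 a0 !dot0l.
split; first by case: sY => _ _ _ _; apply.
exists k; split; first by rewrite k_succ; exact: cone_sandwiched_affdim sY g1_indep.
split; last by rewrite k_succ; exact: hyperplane_not_affindep a_neq0 (on_face Y).
have [s [s_face s_span]] := cone_sandwiched_face_points sY supp.
have k_eq : k = n.-1 by rewrite -k_succ.
have face_p1 : face_of Y a beta p1 by split=> //; case: sY.
rewrite k_eq in dimF *.
apply: has_affindep_hyperplane a_neq0 (on_face X) dimF face_p1 s_face _.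
by move=> w _ /s_span[wp wg1 wg2]; exact: (cone_sandwiched_face_const sX supp wp wg1 wg2).
Qed.

End ConeSandwich.

Section BasisCone.
Variables (R : realType) (n M : nat) (A : 'M[R]_(M, n)) (b : 'cV[R]_M).
Variables (p : 'cV[R]_n) (B : {set 'I_M}).
Local Notation V := 'cV[R]_n.
Hypothesis cB : cobasis A b p B.

Let card_B : #|B| = n. Proof. by case: cB. Qed.

Definition basis_row (j : 'I_n) : 'I_M := enum_val (cast_ord (esym card_B) j).

Lemma basis_row_in j : basis_row j \in B.
Proof. exact: enum_valP. Qed.

Lemma basis_row_inj : injective basis_row.
Proof. by move=> j k /enum_val_inj/cast_ord_inj. Qed.

Lemma basis_rowP i : i \in B -> exists j, i = basis_row j.
Proof.
move=> iB; exists (cast_ord card_B (enum_rank_in iB i)).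
by rewrite /basis_row cast_ordK enum_rankK_in.
Qed.

Lemma big_cobasis (T : zmodType) (F : 'I_M -> T) :
  \sum_(i in B) F i = \sum_j F (basis_row j).
Proof.
rewrite big_enum_val (reindex (cast_ord (esym card_B))) //.
by exists (cast_ord card_B) => i _; [apply: cast_ordKV | apply: cast_ordK].
Qed.

Definition basis_mx : 'M[R]_n := rowsub basis_row A.

Lemma basis_mx_mulmx (x : V) j : (basis_mx *m x) j 0 = (A *m x) (basis_row j) 0.
Proof. by rewrite mul_rowsub_mx mxE. Qed.

Lemma basis_mx_unit : basis_mx \in unitmx.
Proof.
have [_ B_indep _] := cB; rewrite -row_free_unit; apply: ker0_row_free => c c0.
pose l i := \sum_(j | basis_row j == i) c 0 j.
have l_basis j : l (basis_row j) = c 0 j.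
  by rewrite /l (big_pred1 j) // => k; rewrite inj_eq //; exact: basis_row_inj.
have : \sum_(i in B) l i *: row i A = 0.
  rewrite big_cobasis -[RHS]c0 mulmx_sum_row.
  by apply: eq_bigr => j _; rewrite l_basis row_rowsub.
move/B_indep => l0; apply/rowP => j; rewrite -l_basis mxE l0 //; exact: basis_row_in.
Qed.

Definition basis_ray (j : 'I_n) : V := col j (invmx basis_mx).

Lemma basis_row_ray j k : (A *m basis_ray k) (basis_row j) 0 = (j == k)%:R.
Proof.
rewrite -basis_mx_mulmx; have /matrixP/(_ j k) := mulmxV basis_mx_unit.
by rewrite !mxE => <-; apply: eq_bigr => t _; rewrite !mxE.
Qed.

Lemma basis_ray_ge0 j i : i \in B -> 0 <= (A *m basis_ray j) i 0.
Proof. by case/basis_rowP=> k ->; rewrite basis_row_ray ler0n. Qed.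

Lemma basis_ray_decomp (x : V) : x = \sum_j (A *m x) (basis_row j) 0 *: basis_ray j.
Proof.
rewrite -{1}(mulKmx basis_mx_unit x); apply/colP => i.
rewrite summxE mxE; apply: eq_bigr => j _.
by rewrite basis_mx_mulmx [RHS]mxE [basis_ray j i 0]mxE mulrC.
Qed.

Lemma basis_ray_indep : lin_indep basis_ray.
Proof.
move=> l sum0 j; have /(congr1 (fun x => (A *m x) (basis_row j) 0)) := sum0.
rewrite /= mulmx_sumr summxE mulmx0 [RHS]mxE (bigD1 j) //= big1 => [|k kj].
  by rewrite addr0 -scalemxAr mxE basis_row_ray eqxx mulr1.
by rewrite -scalemxAr mxE basis_row_ray eq_sym (negPf kj) mulr0.
Qed.

Lemma basis_coneE x : basis_cone A b B x <-> forall i, i \in B -> 0 <= (A *m (x - p)) i 0.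
Proof.
have [_ _ tight_B] := cB.
have slackE i : i \in B -> (A *m (x - p)) i 0 = (A *m x) i 0 - b i 0.
  by move=> iB; rewrite mulmxBr [(A *m x - A *m p) i 0]mxE [(- (A *m p)) i 0]mxE tight_B.
by split=> xB i iB; have := xB i iB; rewrite slackE // subr_ge0.
Qed.

Lemma basis_cone_dir_dot_ge0 (a d : V) : (forall j, 0 <= dot a (basis_ray j)) ->
  (forall i, i \in B -> 0 <= (A *m d) i 0) -> 0 <= dot a d.
Proof.
move=> a_ray d_ge0; rewrite (basis_ray_decomp d) dot_sumr sumr_ge0 // => j _.
by rewrite dotZr mulr_ge0 ?d_ge0 ?basis_row_in.
Qed.

Lemma valid_basis_cone a : (forall j, 0 <= dot a (basis_ray j)) ->
  valid_ineq (basis_cone A b B) a (dot a p).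
Proof.
move=> a_ray x /basis_coneE x_ge0; rewrite -subr_ge0 -dotBr.
exact: basis_cone_dir_dot_ge0.
Qed.

Lemma ext_ray_dir_dot_ge0 a d : (forall j, 0 <= dot a (basis_ray j)) ->
  ext_ray_dir (basis_cone A b B) p d -> 0 <= dot a d.
Proof.
move=> a_ray [/basis_coneE d_ge0 _ _]; apply: basis_cone_dir_dot_ge0 => // i iB.
by have := d_ge0 i iB; rewrite addrC addKr.
Qed.

Lemma basis_ray_ext j : ext_ray_dir (basis_cone A b B) p (basis_ray j).
Proof.
have cone_ray : basis_cone A b B (p + basis_ray j).
  by apply/basis_coneE => i; rewrite addrC addKr; exact: basis_ray_ge0.
split=> // [|u v /basis_coneE u_ge0 /basis_coneE v_ge0 ray_uv].
  apply/eqP => ray0; have /eqP := basis_row_ray j j.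
  by rewrite ray0 mulmx0 mxE eqxx eq_sym oner_eq0.
rewrite addrC addKr in u_ge0; rewrite addrC addKr in v_ge0.
have off_j k : k != j -> (A *m u) (basis_row k) 0 = 0 /\ (A *m v) (basis_row k) 0 = 0.
  move=> kj; have /eqP := congr1 (fun x => (A *m x) (basis_row k) 0) ray_uv.
  rewrite /= basis_row_ray (negPf kj) mulmxDr mxE eq_sym.
  rewrite paddr_eq0 ?u_ge0 ?v_ge0 ?basis_row_in //.
  by case/andP => /eqP -> /eqP ->.
have on_ray d : (forall k, k != j -> (A *m d) (basis_row k) 0 = 0) ->
    d = (A *m d) (basis_row j) 0 *: basis_ray j.
  move=> d0; rewrite {1}(basis_ray_decomp d) (bigD1 j) //= big1 ?addr0 // => k /d0 ->.
  exact: scale0r.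
exists ((A *m u) (basis_row j) 0), ((A *m v) (basis_row j) 0); split.
- exact/u_ge0/basis_row_in.
- exact/v_ge0/basis_row_in.
- by apply: on_ray => k /off_j[].
- by apply: on_ray => k /off_j[].
Qed.

Lemma cobasis_exchange i j : i \notin B -> tight A b p i ->
  (row i A *m invmx basis_mx) 0 j != 0 -> cobasis A b p (i |: (B :\ basis_row j)).
Proof.
move=> iB ti mu_j; have [_ B_indep tight_B] := cB.
set mu := row i A *m invmx basis_mx.
have row_iE : row i A = mu *m basis_mx by rewrite mulmxKV ?basis_mx_unit.
have iB' : i \notin B :\ basis_row j by rewrite in_setD1 (negPf iB) andbF.
split.
- by rewrite cardsU1 iB' -card_B (cardsD1 (basis_row j) B) basis_row_in.
- move=> l; rewrite big_setU1 //=.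
  pose l0 k := if k == basis_row j then 0 else l k.
  have -> : \sum_(k in B :\ basis_row j) l k *: row k A = \sum_(k in B) l0 k *: row k A.
    rewrite [RHS](big_setD1 (basis_row j)) ?basis_row_in //= /l0 eqxx scale0r add0r.
    by apply: eq_bigr => k; rewrite in_setD1 => /andP[/negPf ->].
  rewrite big_cobasis row_iE mulmx_sum_row scaler_sumr -big_split /=.
  pose c t := l i * mu 0 t + l0 (basis_row t).
  move=> sum0; have /eqP : (\row_t c t) *m basis_mx = 0.
    rewrite mulmx_sum_row -[RHS]sum0; apply: eq_bigr => t _.
    by rewrite mxE row_rowsub scalerA -scalerDl.
  rewrite mulmx_free_eq0 ?row_free_unit ?basis_mx_unit // => /eqP/rowP c0.
  have li0 : l i = 0.
    have := c0 j; rewrite !mxE /c /l0 eqxx addr0 => /eqP.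
    by rewrite mulf_eq0 (negPf mu_j) orbF => /eqP.
  move=> k; rewrite in_setU1 => /predU1P[-> //|].
  rewrite in_setD1 => /andP[kj /basis_rowP[t kt]].
  by have := c0 t; rewrite !mxE /c /l0 li0 mul0r add0r -kt (negPf kj).
- move=> k; rewrite in_setU1 => /predU1P[-> //|].
  by rewrite in_setD1 => /andP[_]; exact: tight_B.
Qed.

Hypothesis cobasis_uniq : forall B', cobasis A b p B' -> B' = B.

Lemma tight_row_eq0 i : i \notin B -> tight A b p i -> row i A = 0.
Proof.
move=> iB ti; apply/eqP; apply: contraT => ri_neq0.
have [j mu_j] : exists j, (row i A *m invmx basis_mx) 0 j != 0.
  apply/existsP; apply: contraNT ri_neq0; rewrite negb_exists => /forallP mu0.
  suff mu_eq0 : row i A *m invmx basis_mx = 0.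
    by rewrite -(mulmxKV basis_mx_unit (row i A)) mu_eq0 mul0mx.
  by apply/rowP => j; rewrite [RHS]mxE; apply/eqP/negbNE/mu0.
have := cobasis_uniq (cobasis_exchange iB ti mu_j).
by move/setP/(_ i); rewrite in_setU1 eqxx (negPf iB).
Qed.

Lemma cobasis_feasible_dir d : polyh A b p ->
  (forall i, i \in B -> 0 <= (A *m d) i 0) ->
  exists2 lam, 0 < lam & polyh A b (p + lam *: d).
Proof.
move=> Pp d_ge0.
have tight_ge0 i : tight A b p i -> 0 <= (A *m d) i 0.
  move=> ti; have [iB|iB] := boolP (i \in B); first exact: d_ge0.
  rewrite mxE big1 // => k _; have /rowP/(_ k) := tight_row_eq0 iB ti.
  by rewrite !mxE => ->; rewrite mul0r.
pose slack i := (A *m p) i 0 - b i 0.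
have [e e_gt0 e_dom] : exists2 e, 0 < e &
    forall i, e * `|if slack i == 0 then 0 else (A *m d) i 0| <= slack i.
  by apply: exists_dominating_scale => i; rewrite ?subr_ge0 ?Pp // => ->; rewrite eqxx.
exists e => // i; rewrite mulmxDr -scalemxAr [(A *m p + _) i 0]mxE [(e *: (A *m d)) i 0]mxE.
have := e_dom i; have [/eqP|s_neq0] := eqVneq (slack i) 0.
  rewrite subr_eq0 => /eqP ti _.
  by rewrite ti lerDl; apply: mulr_ge0; [exact: ltW | exact: tight_ge0].
move=> /= dom; rewrite -lerBlDl.
apply: le_trans (_ : - (e * `|(A *m d) i 0|) <= _); first by rewrite lerNr opprB.
rewrite -mulrN; apply: ler_wpM2l; first exact: ltW.
by rewrite lerNl -normrN ler_norm.
Qed.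

Lemma basis_ray_feasible : polyh A b p ->
  exists2 lam : 'I_n -> R, forall j, 0 < lam j &
    forall j, polyh A b (p + lam j *: basis_ray j).
Proof.
move=> Pp.
have /fin_all_exists[lam ray] :
    forall j, exists lam : R, 0 < lam /\ polyh A b (p + lam *: basis_ray j).
  move=> j; have [|lam ? ?] := cobasis_feasible_dir (d := basis_ray j) Pp.
    exact: basis_ray_ge0.
  by exists lam.
by exists lam => j; case: (ray j).
Qed.

End BasisCone.

Section SplitHulls.
Variables (R : realType) (n M1 M2 : nat).
Variables (A1 : 'M[R]_(M1, n)) (b1 : 'cV[R]_M1) (A2 : 'M[R]_(M2, n)) (b2 : 'cV[R]_M2).
Variables (p1 p2 : 'cV[R]_n) (B1 : {set 'I_M1}) (B2 : {set 'I_M2}).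
Hypotheses (cB1 : cobasis A1 b1 p1 B1) (cB2 : cobasis A2 b2 p2 B2).

Lemma cone_sandwiched_msum :
  cone_sandwiched p1 p2 (basis_ray cB1) (basis_ray cB2)
    (msum (conv [set x | x = p1 \/ x = p2])
       (cone (ext_ray_dir (basis_cone A1 b1 B1) p1 `|`
              ext_ray_dir (basis_cone A2 b2 B2) p2))).
Proof.
set K := [set x | _]; set E := _ `|` _.
have apex q : K q -> msum (conv K) (cone E) q.
  by move=> Kq; exists q, 0; split; [exact: sub_conv | exact: cone0 | rewrite addr0].
have apex_ray q d : K q -> E d -> msum (conv K) (cone E) (q + d).
  by move=> Kq Ed; exists q, d; split; [exact: sub_conv | exact: sub_cone |].
split; [by apply: apex; left | by apply: apex; right | | |].
- exists (fun _ => 1) => // j; rewrite scale1r.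
  by apply: apex_ray; [left | left; exact: basis_ray_ext].
- exists (fun _ => 1) => // j; rewrite scale1r.
  by apply: apex_ray; [right | right; exact: basis_ray_ext].
move=> a beta [ap1 ap2 a_ray1 a_ray2]; rewrite -[beta]addr0; apply: valid_msum.
  by apply: valid_conv => _ [->|->]; rewrite ?ap1 ?ap2.
by apply: valid_cone => d [] /ext_ray_dir_dot_ge0; [apply | apply].
Qed.

Hypotheses (uniq1 : forall B, cobasis A1 b1 p1 B -> B = B1)
           (uniq2 : forall B, cobasis A2 b2 p2 B -> B = B2).

Lemma cone_sandwiched_closure_conv : polyh A1 b1 p1 -> polyh A2 b2 p2 ->
  cone_sandwiched p1 p2 (basis_ray cB1) (basis_ray cB2)
    (closure (conv (polyh A1 b1 `|` polyh A2 b2))).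
Proof.
move=> P1p P2p.
set Q := polyh A1 b1 `|` polyh A2 b2.
have sub_hull : Q `<=` closure (conv Q) by move=> x Qx; apply/subset_closure/sub_conv.
split; [by apply: sub_hull; left | by apply: sub_hull; right | | |].
- have [lam lam_gt0 ray] := basis_ray_feasible cB1 uniq1 P1p.
  by exists lam => // j; apply: sub_hull; left.
- have [lam lam_gt0 ray] := basis_ray_feasible cB2 uniq2 P2p.
  by exists lam => // j; apply: sub_hull; right.
move=> a beta [ap1 ap2 a_ray1 a_ray2]; apply/valid_closure/valid_conv => x [] Px.
  by rewrite -ap1; apply: valid_basis_cone a_ray1 _ _ => i _.
by rewrite -ap2; apply: valid_basis_cone a_ray2 _ _ => i _.
Qed.

End SplitHulls.

Theorem theorem3 (R : realType) (n m : nat)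
  (A : 'M[rat]_(m, n)) (b : 'cV[rat]_m) (c xbar : 'cV[R]_n)
  (pi : 'cV[int]_n) (pi0 : int) (p1 p2 : 'cV[R]_n) (B1 B2 : {set 'I_(m + 1)}) :
  affdim (polyh (ratmx R A) (ratmx R b)) n ->
  pointed (polyh (ratmx R A) (ratmx R b)) ->
  basic_optimal (ratmx R A) (ratmx R b) c xbar ->
  ~ PD A b pi pi0 xbar ->
  basic_optimal (sysA1 R A pi) (sysb1 R b pi0) c p1 ->
  basic_optimal (sysA2 R A pi) (sysb2 R b pi0) c p2 ->
  cobasis (sysA1 R A pi) (sysb1 R b pi0) p1 B1 ->
  cobasis (sysA2 R A pi) (sysb2 R b pi0) p2 B2 ->
  (forall B, cobasis (sysA1 R A pi) (sysb1 R b pi0) p1 B -> B = B1) ->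
  (forall B, cobasis (sysA2 R A pi) (sysb2 R b pi0) p2 B -> B = B2) ->
  (forall (a : 'cV[R]_n) (beta : R),
     facet_ineq (PD0 A b pi pi0 p1 p2 B1 B2) a beta ->
     dot a p1 = beta -> dot a p2 = beta ->
     facet_ineq (PD A b pi pi0) a beta) /\
  (forall (a : 'cV[R]_n) (beta : R),
     facet_ineq (PD A b pi pi0) a beta ->
     dot a p1 = beta -> dot a p2 = beta -> dot a xbar < beta ->
     facet_ineq (PD0 A b pi pi0 p1 p2 B1 B2) a beta).
Proof.
move=> _ _ _ _ [P1p _ _] [P2p _ _] cB1 cB2 uniq1 uniq2.
have rays_indep := basis_ray_indep (cB := cB1).
have sPD0 := cone_sandwiched_msum cB1 cB2.
have sPD := cone_sandwiched_closure_conv cB1 cB2 uniq1 uniq2 P1p P2p.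
split=> a beta facet ap1 ap2 => [|_].
  exact: facet_ineq_cone_sandwiched rays_indep sPD0 sPD ap1 ap2 facet.
exact: facet_ineq_cone_sandwiched rays_indep sPD sPD0 ap1 ap2 facet.
Qed.
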